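(* For every class of closed formulas $\mathbb{P}$ and every $n$, every safety problem provable in $\mathbf{FI}^{\mathbb{P}}_n$ is also provable in $\mathbf{F}^{\wedge_n\mathbb{P}}$. Moreover, for every $n>0$ there exist a class of predicates $\mathbb{P}$ and a safety problem $\Pi$ such that $\Pi$ is provable in $\mathbf{FI}^{\mathbb{P}}_n$ but not provable in $\mathbf{FI}^{\mathbb{P}}_{n-1}$.
   Context: A first-order vocabulary $\Sigma$ consists of constant, function and relation symbols; $\Sigma'=\{a' : a\in\Sigma\}$ is a disjoint copy, and for a formula $\varphi$ over $\Sigma$, $\varphi'$ denotes $\varphi$ with every symbol replaced by its primed copy. A safety problem is a triple $(\iota,\tau,\beta)$, where $\iota,\beta$ are closed formulas over $\Sigma$ and $\tau$ is a closed formula over $\Sigma\uplus\Sigma'$. $A\Rightarrow B$ means the implication $A\to B$ is valid. Proofs: a proof of $\Pi$ in a system is a finite tree whose nodes are safety problems, whose root is $\Pi$, and in which each node together with its children is an instance of one of the system's inference rules, with side conditions valid. Rules ($\varphi$ ranges over closed formulas over $\Sigma$): (Ind): no premises; conclusion $(\iota,\tau,\neg\varphi)$; side conditions $\iota\Rightarrow\varphi$ and $\varphi\wedge\tau\Rightarrow\varphi'$. (Cons): premise $(\iota,\tau,\neg\varphi)$; conclusion $(\iota,\tau,\beta)$; side condition $\varphi\Rightarrow\neg\beta$. (Inc): premises $(\iota,\tau,\neg\varphi)$ and $(\iota\wedge\varphi,\ \tau\wedge\varphi\wedge\varphi',\ \beta\wedge\varphi)$; conclusion $(\iota,\tau,\beta)$.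 $\mathbf{F}$ consists of (Ind) and (Cons); $\mathbf{FI}$ consists of (Ind), (Cons), (Inc). For a class of closed formulas $\mathbb{P}$, $\mathbf{F}^{\mathbb{P}}$ (resp. $\mathbf{FI}^{\mathbb{P}}$) restricts applications of (Ind) to $\varphi\in\mathbb{P}$, and $\mathbf{FI}^{\mathbb{P}}_n$ further restricts proofs to use at most $n$ applications of (Ind). $\wedge_n\mathbb{P}$ denotes the class of conjunctions of at most $n$ predicates from $\mathbb{P}$. *)

From mathcomp Require Import all_boot.

Unset Printing Implicit Defensive.

Record vocab := Vocab {
  fsym : Type;
  far : fsym -> nat;
  rsym : Type;
  rar : rsym -> nat
}.
Arguments far {v} _.
Arguments rar {v} _.

(* Sigma ⊎ Sigma' : each symbol tagged by a boolean, true = primed copy. *)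
Definition dbl (S : vocab) : vocab :=
  {| fsym := (bool * fsym S)%type; far := fun p => far p.2;
     rsym := (bool * rsym S)%type; rar := fun p => rar p.2 |}.

Inductive term (S : vocab) : Type :=
| Var : nat -> term S
| App : forall f : fsym S, ('I_(far f) -> term S) -> term S.

Inductive form (S : vocab) : Type :=
| FFalse : form S
| FTrue : form S
| FEq : term S -> term S -> form S
| FRel : forall r : rsym S, ('I_(rar r) -> term S) -> form S
| FNot : form S -> form S
| FAnd : form S -> form S -> form S
| FOr : form S -> form S -> form S
| FImp : form S -> form S -> form S
| FAll : nat -> form S -> form S
| FEx : nat -> form S -> form S.

Arguments FFalse {S}.
Arguments Var {S} _.
Arguments App {S} f _.
Arguments FEq {S} _ _.
Arguments FRel {S} r _.
Arguments FNot {S} _.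
Arguments FAnd {S} _ _.
Arguments FOr {S} _ _.
Arguments FImp {S} _ _.
Arguments FAll {S} _ _.
Arguments FEx {S} _ _.
Arguments FTrue {S}.

Fixpoint occurs_term {S : vocab} (x : nat) (t : term S) : Prop :=
  match t with
  | Var y => x = y
  | App f args => exists i, occurs_term x (args i)
  end.

Fixpoint free_in {S : vocab} (x : nat) (phi : form S) : Prop :=
  match phi with
  | FFalse | FTrue => False
  | FEq t u => occurs_term x t \/ occurs_term x u
  | FRel r args => exists i, occurs_term x (args i)
  | FNot p => free_in x p
  | FAnd p q | FOr p q | FImp p q => free_in x p \/ free_in x q
  | FAll y p | FEx y p => x <> y /\ free_in x p
  end.

Definition closed {S : vocab} (phi : form S) : Prop := forall x, ~ free_in x phi.

Fixpoint tag_term {S : vocab} (b : bool) (t : term S) : term (dbl S) :=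
  match t with
  | Var y => @Var (dbl S) y
  | App f args => @App (dbl S) (b, f) (fun i => tag_term b (args i))
  end.

Fixpoint tag_form {S : vocab} (b : bool) (phi : form S) : form (dbl S) :=
  match phi with
  | FFalse => FFalse
  | FTrue => FTrue
  | FEq t u => FEq (tag_term b t) (tag_term b u)
  | FRel r args => @FRel (dbl S) (b, r) (fun i => tag_term b (args i))
  | FNot p => FNot (tag_form b p)
  | FAnd p q => FAnd (tag_form b p) (tag_form b q)
  | FOr p q => FOr (tag_form b p) (tag_form b q)
  | FImp p q => FImp (tag_form b p) (tag_form b q)
  | FAll y p => FAll y (tag_form b p)
  | FEx y p => FEx y (tag_form b p)
  end.

Definition unprimed {S : vocab} (phi : form S) : form (dbl S) := tag_form false phi.
Definition primed {S : vocab} (phi : form S) : form (dbl S) := tag_form true phi.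

Record structure (S : vocab) := Structure {
  dom : Type;
  dom_inh : dom;
  fint : forall f : fsym S, ('I_(far f) -> dom) -> dom;
  rint : forall r : rsym S, ('I_(rar r) -> dom) -> Prop
}.
Arguments dom {S} s.
Arguments fint {S} s f _.
Arguments rint {S} s r _.

Definition upd {D : Type} (rho : nat -> D) (x : nat) (d : D) : nat -> D :=
  fun y => if y == x then d else rho y.

Fixpoint eval {S : vocab} (M : structure S) (rho : nat -> dom M) (t : term S)
  : dom M :=
  match t with
  | Var y => rho y
  | App f args => fint M f (fun i => eval M rho (args i))
  end.

Fixpoint holds {S : vocab} (M : structure S) (rho : nat -> dom M) (phi : form S)
  : Prop :=
  match phi with
  | FFalse => False
  | FTrue => True
  | FEq t u => eval M rho t = eval M rho u
  | FRel r args => rint M r (fun i => eval M rho (args i))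
  | FNot p => ~ holds M rho p
  | FAnd p q => holds M rho p /\ holds M rho q
  | FOr p q => holds M rho p \/ holds M rho q
  | FImp p q => holds M rho p -> holds M rho q
  | FAll y p => forall d : dom M, holds M (upd rho y d) p
  | FEx y p => exists d : dom M, holds M (upd rho y d) p
  end.

Definition valid {S : vocab} (phi : form S) : Prop :=
  forall (M : structure S) (rho : nat -> dom M), holds M rho phi.

Definition entails {S : vocab} (A B : form S) : Prop := valid (FImp A B).

Record problem (S : vocab) := Problem {
  p_init : form S;
  p_trans : form (dbl S);
  p_bad : form S
}.
Arguments Problem {S} _ _ _.
Arguments p_init {S} _.
Arguments p_trans {S} _.
Arguments p_bad {S} _.

Definition is_safety_problem {S : vocab} (Pi : problem S) : Prop :=
  closed (p_init Pi) /\ closed (p_trans Pi) /\ closed (p_bad Pi).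

(* derives inc P Pi k : there is a proof tree of Pi using rules (Ind), (Cons),
   and additionally (Inc) when inc = true, in which every application of (Ind)
   uses a formula in P, and (Ind) is applied exactly k times.  *)
Inductive derives {S : vocab} (inc : bool) (P : form S -> Prop)
  : problem S -> nat -> Prop :=
| d_ind (iota : form S) (tau : form (dbl S)) (phi : form S) :
    closed phi -> P phi ->
    entails iota phi ->
    entails (FAnd (unprimed phi) tau) (primed phi) ->
    derives inc P (Problem iota tau (FNot phi)) 1
| d_cons (iota : form S) (tau : form (dbl S)) (beta phi : form S) (k : nat) :
    closed phi ->
    derives inc P (Problem iota tau (FNot phi)) k ->
    entails phi (FNot beta) ->
    derives inc P (Problem iota tau beta) k
| d_inc (iota : form S) (tau : form (dbl S)) (beta phi : form S) (k1 k2 : nat) :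
    inc = true ->
    closed phi ->
    derives inc P (Problem iota tau (FNot phi)) k1 ->
    derives inc P (Problem (FAnd iota phi)
                           (FAnd tau (FAnd (unprimed phi) (primed phi)))
                           (FAnd beta phi)) k2 ->
    derives inc P (Problem iota tau beta) (k1 + k2).

Definition provable_F {S : vocab} (P : form S -> Prop) (Pi : problem S) : Prop :=
  exists k, derives false P Pi k.

Definition provable_FI_n {S : vocab} (P : form S -> Prop) (n : nat)
  (Pi : problem S) : Prop :=
  exists k, k <= n /\ derives true P Pi k.

Definition closed_class {S : vocab} (P : form S -> Prop) : Prop :=
  forall phi, P phi -> closed phi.

Definition big_and {S : vocab} (phi : form S) (l : seq (form S)) : form S :=
  foldl (@FAnd S) phi l.

Definition wedge_n {S : vocab} (n : nat) (P : form S -> Prop) (psi : form S)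
  : Prop :=
  exists (phi : form S) (l : seq (form S)),
    (size l).+1 <= n /\ P phi /\ (forall i, i < size l -> P (nth phi l i)) /\ psi = big_and phi l.

(* The formulas introduced by the (Ind) steps of an FI-proof form a list whose
   conjunction is an inductive invariant excluding the bad states: (Cons) only
   weakens the bad condition, and (Inc) concatenates the invariant of its first
   premise, which implies the strengthening formula phi, with the invariant of
   its second premise.  One (Ind) on that conjunction followed by (Cons) is then
   an F-proof.  For strictness take nullary atoms p_0, ..., p_(n-1), an
   unsatisfiable initial condition and transition relation, and the bad
   condition ~ (p_0 /\ ... /\ p_(n-1)): (Inc) introduces the atoms one (Ind) at
   a time, whereas an invariant built from fewer than n atoms misses some p_j
   and holds in the bad structure where p_j is the only false atom. *)

From Stdlib Require Import Classical FunctionalExtensionality.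
From Stdlib Require List.
From mathcomp Require Import all_boot.
Import List (Forall, Forall_app, Forall_impl, Forall_cons_iff).

Lemma Forall1 {T : Type} (Q : T -> Prop) (x : T) : Forall Q [:: x] <-> Q x.
Proof. by rewrite Forall_cons_iff; split=> [[]|Qx] //; split. Qed.

Section Reducts.

Context {S : vocab}.

Definition reduct (b : bool) (M : structure (dbl S)) : structure S :=
  {| dom := dom M; dom_inh := dom_inh _ M;
     fint := fun f => fint M (b, f); rint := fun r => rint M (b, r) |}.

Lemma eval_tag_term b M rho (t : term S) :
  eval M rho (tag_term b t) = eval (reduct b M) rho t.
Proof.
elim: t => [//|f args IH] /=.
by f_equal; apply: functional_extensionality.
Qed.

Lemma holds_tag_form b M (phi : form S) rho :
  holds M rho (tag_form b phi) <-> holds (reduct b M) rho phi.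
Proof.
elim: phi rho => //=.
- by move=> t u rho; rewrite !eval_tag_term.
- move=> r args rho.
  have -> : (fun i => eval M rho (tag_term b (args i)))
            = (fun i => eval (reduct b M) rho (args i)).
    by apply: functional_extensionality => i; apply: eval_tag_term.
  by [].
- by move=> p IH rho; rewrite IH.
- by move=> p IHp q IHq rho; rewrite IHp IHq.
- by move=> p IHp q IHq rho; rewrite IHp IHq.
- by move=> p IHp q IHq rho; rewrite IHp IHq.
- by move=> y p IH rho; split=> H d; apply/IH.
- by move=> y p IH rho; split=> -[d H]; exists d; apply/IH.
Qed.

End Reducts.

Section Invariants.

Context {S : vocab}.

Record inductive_invariant (iota : form S) (tau : form (dbl S)) (beta : form S)
    (L : seq (form S)) : Prop := {
  invariant_init : forall M rho, holds M rho iota -> Forall (holds M rho) L;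
  invariant_step : forall M rho, Forall (holds (reduct false M) rho) L ->
    holds M rho tau -> Forall (holds (reduct true M) rho) L;
  invariant_safe : forall M rho, Forall (holds M rho) L -> ~ holds M rho beta
}.

Lemma inductive_invariant_Ind iota tau phi :
  entails iota phi -> entails (FAnd (unprimed phi) tau) (primed phi) ->
  inductive_invariant iota tau (FNot phi) [:: phi].
Proof.
rewrite /unprimed /primed => init step; split=> M rho; rewrite ?Forall1.
- exact: init.
- move=> Hphi Htau; apply/holds_tag_form/step; split=> //.
  exact/holds_tag_form.
- by move=> Hphi /=; apply.
Qed.

Lemma inductive_invariant_Cons iota tau beta phi L :
  inductive_invariant iota tau (FNot phi) L -> entails phi (FNot beta) ->
  inductive_invariant iota tau beta L.
Proof.
case=> init step safe excl; split=> // M rho HL Hbeta.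
by apply: (safe M rho HL) => Hphi; apply: excl Hbeta.
Qed.

Lemma inductive_invariant_Inc iota tau beta phi L1 L2 :
  inductive_invariant iota tau (FNot phi) L1 ->
  inductive_invariant (FAnd iota phi)
    (FAnd tau (FAnd (unprimed phi) (primed phi))) (FAnd beta phi) L2 ->
  inductive_invariant iota tau beta (L1 ++ L2).
Proof.
rewrite /unprimed /primed => -[init1 step1 safe1] [init2 step2 safe2].
have L1_phi M rho : Forall (holds M rho) L1 -> holds M rho phi.
  by move=> HL1; apply: NNPP; apply: safe1 HL1.
split=> M rho.
- move=> Hiota; have HL1 := init1 M rho Hiota.
  by apply/Forall_app; split=> //; apply: init2; split=> //; apply: L1_phi.
- move=> /Forall_app [HL1 HL2] Htau; have HL1' := step1 M rho HL1 Htau.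
  apply/Forall_app; split=> //; apply: step2 => //.
  by split=> //; split; apply/holds_tag_form/L1_phi.
- move=> /Forall_app [HL1 HL2] Hbeta; apply: (safe2 M rho HL2).
  by split=> //; apply: L1_phi.
Qed.

Lemma derives_invariant {inc P Pi k} :
  derives inc P Pi k ->
  exists L, [/\ size L = k, Forall P L &
                inductive_invariant (p_init Pi) (p_trans Pi) (p_bad Pi) L].
Proof.
elim=> {Pi k} [iota tau phi _ Pphi init step
             | iota tau beta phi k _ _ [L [sizeL PL invL]] excl
             | iota tau beta phi k1 k2 _ _ _ [L1 [size1 PL1 inv1]]
                 _ [L2 [size2 PL2 inv2]]].
- exists [:: phi]; split => //; first exact/Forall1.
  exact: inductive_invariant_Ind.
- by exists L; split=> //; apply: inductive_invariant_Cons excl.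
- exists (L1 ++ L2); split; first by rewrite size_cat size1 size2.
    exact/Forall_app.
  exact: inductive_invariant_Inc inv1 inv2.
Qed.

Lemma derives_gt0 {inc} {P : form S -> Prop} {Pi k} :
  derives inc P Pi k -> 0 < k.
Proof.
by elim=> // ? ? ? ? k1 k2 _ _ _ k1_gt0 _ _; rewrite addn_gt0 k1_gt0.
Qed.

Lemma holds_big_and M rho (a : form S) l :
  holds M rho (big_and a l) <-> Forall (holds M rho) (a :: l).
Proof.
elim: l a => [|b l IH] a; first by rewrite Forall1.
rewrite /big_and /= -/(big_and _ l) IH !Forall_cons_iff /=; tauto.
Qed.

Lemma closed_big_and (a : form S) l :
  closed a -> Forall closed l -> closed (big_and a l).
Proof.
elim: l a => [//|b l IH] a Ca /Forall_cons_iff [Cb Cl].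
by apply: IH Cl => x /= [/Ca|/Cb].
Qed.

Lemma inductive_invariant_big_and iota tau beta a l :
  inductive_invariant iota tau beta (a :: l) ->
  inductive_invariant iota tau beta [:: big_and a l].
Proof.
case=> init step safe; split=> M rho; rewrite ?Forall1 ?holds_big_and.
- exact: init.
- exact: step.
- exact: safe.
Qed.

Lemma derives_of_invariant inc P iota tau beta phi :
  closed phi -> P phi -> inductive_invariant iota tau beta [:: phi] ->
  derives inc P (Problem iota tau beta) 1.
Proof.
move=> Cphi Pphi [init step safe].
apply: (@d_cons _ _ _ iota tau beta phi 1 Cphi); last first.
  by move=> M rho Hphi; apply/safe/Forall1.
apply: d_ind => // M rho; rewrite /unprimed /primed.
- by move=> /init /Forall1.
- move=> [/holds_tag_form Hphi Htau]; apply/holds_tag_form/Forall1.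
  exact/step/Htau/Forall1.
Qed.

Lemma wedge_n_big_and n P (a : form S) l :
  (size l).+1 <= n -> P a -> Forall P l -> wedge_n n P (big_and a l).
Proof.
move=> size_l Pa Pl; exists a, l; do 3!split=> //.
elim: l Pl {size_l} => [//|b l IH] /Forall_cons_iff [Pb Pl] [//|i] /=.
by rewrite ltnS; apply: IH.
Qed.

Lemma derives_unsat_Ind inc (P : form S -> Prop) iota tau phi :
  entails iota FFalse -> entails tau FFalse -> closed phi -> P phi ->
  derives inc P (Problem iota tau (FNot phi)) 1.
Proof.
move=> iota0 tau0 Cphi Pphi; apply: d_ind => // M rho.
- by move=> /iota0 [].
- by move=> [_ /tau0 []].
Qed.

Lemma derives_unsat_Inc (P : form S -> Prop) iota tau beta a l :
  entails iota FFalse -> entails tau FFalse -> closed_class P ->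
  P a -> Forall P l -> entails (big_and a l) (FNot beta) ->
  derives true P (Problem iota tau beta) (size l).+1.
Proof.
move=> + + CP; elim: l a iota tau beta => [|b l IH] a iota tau beta;
  move=> iota0 tau0 Pa Pl excl;
  have Ind_a : derives true P (Problem iota tau (FNot a)) 1
    by apply: derives_unsat_Ind => //; apply: CP.
- exact: (@d_cons _ _ _ iota tau beta a 1 (CP a Pa) Ind_a excl).
- move: Pl => /Forall_cons_iff [Pb Pl].
  apply: (@d_inc _ _ _ iota tau beta a 1 _ erefl (CP a Pa) Ind_a).
  apply: (IH b) => //.
  + by move=> M rho [/iota0].
  + by move=> M rho [/tau0].
  + move=> M rho /holds_big_and Hbl [Hbeta Ha].
    apply: (excl M rho) Hbeta.
    by apply/(holds_big_and _ _ a (b :: l)); constructor.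
Qed.

End Invariants.

Theorem FI_n_provable_F_wedge (S : vocab) (P : form S -> Prop) n Pi :
  closed_class P -> provable_FI_n P n Pi -> provable_F (wedge_n n P) Pi.
Proof.
move=> CP [k [k_le_n D]].
have [[|a l] [size_L PL invL]] := derives_invariant D.
  by move: (derives_gt0 D); rewrite -size_L.
move: PL => /Forall_cons_iff [Pa Pl]; exists 1.
move: invL => /inductive_invariant_big_and; case: Pi D => iota tau beta _ /=.
apply: derives_of_invariant.
- exact: closed_big_and (CP a Pa) (Forall_impl _ CP Pl).
- by apply: wedge_n_big_and => //; rewrite -size_L in k_le_n.
Qed.

Definition nullary_vocab : vocab :=
  @Vocab Empty_set (fun f => match f with end) nat (fun _ => 0).

Definition atom (i : nat) : form nullary_vocab :=
  @FRel nullary_vocab i (fun _ => Var 0).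

Fixpoint atoms (m : nat) : seq (form nullary_vocab) :=
  if m is m'.+1 then atom m' :: atoms m' else [::].

Definition conj_atoms (m : nat) : form nullary_vocab :=
  big_and (atom m) (atoms m).

Definition atoms_below (n : nat) (phi : form nullary_vocab) : Prop :=
  exists2 i, i < n & phi = atom i.

Definition atom_index (phi : form nullary_vocab) : nat :=
  if phi is FRel r _ then r else 0.

Definition all_but (j : nat) : structure nullary_vocab :=
  @Structure nullary_vocab unit tt (fun f => match f with end)
    (fun r _ => r <> j).

Lemma closed_atom i : closed (atom i).
Proof. by move=> x [[]]. Qed.

Lemma size_atoms m : size (atoms m) = m.
Proof. by elim: m => //= m ->. Qed.

Lemma Forall_atoms (Q : form nullary_vocab -> Prop) m :
  Forall Q (atoms m) <-> forall i, i < m -> Q (atom i).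
Proof.
elim: m => [|m IH] /=; first by split=> // _; constructor.
rewrite Forall_cons_iff IH; split=> [[Qm Qlt] i|Qle].
  by rewrite ltnS leq_eqVlt => /predU1P [->|/Qlt].
by split=> [|i lt_im]; apply: Qle; rewrite // ltnS ltnW.
Qed.

Lemma holds_conj_atoms M rho m :
  holds M rho (conj_atoms m) <-> forall i, i <= m -> holds M rho (atom i).
Proof. by rewrite holds_big_and (Forall_atoms _ m.+1). Qed.

Lemma closed_class_atoms_below n : closed_class (atoms_below n).
Proof. by move=> _ [i _ ->]; apply: closed_atom. Qed.

Lemma all_but_models n j rho L :
  Forall (atoms_below n) L -> j \notin map atom_index L ->
  Forall (holds (all_but j) rho) L.
Proof.
elim: L => [|phi L IH]; first by constructor.
move=> /Forall_cons_iff [[i _ ->] PL].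
rewrite inE negb_or => /andP [/eqP ne_ji jL].
by apply/Forall_cons_iff; split; [move=> /= eq_ij; apply: ne_ji | apply: IH].
Qed.

Lemma fresh_below (s : seq nat) n : size s < n -> exists2 j, j < n & j \notin s.
Proof.
move=> size_s.
have [/allP all_in|/allPn [j j_iota j_s]] := boolP (all (mem s) (iota 0 n)).
  have := uniq_leq_size (iota_uniq 0 n) all_in.
  by rewrite size_iota => /(leq_trans size_s); rewrite ltnn.
by exists j; rewrite // mem_iota in j_iota.
Qed.

Lemma atoms_invariant_size {iota tau m L} :
  Forall (atoms_below m.+1) L ->
  inductive_invariant iota tau (FNot (conj_atoms m)) L -> m < size L.
Proof.
move=> PL [_ _ safe]; rewrite ltnNge; apply/negP => small.
have [j lt_jm jL] : exists2 j, j < m.+1 & j \notin map atom_index L.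
  by apply: fresh_below; rewrite size_map ltnS.
apply: (safe (all_but j) (fun _ => tt)).
  by apply: all_but_models; [exact: PL | exact: jL].
by move=> /holds_conj_atoms /(_ j lt_jm).
Qed.

Lemma FI_n_strict n : 0 < n ->
  exists (S : vocab) (P : form S -> Prop) (Pi : problem S),
    closed_class P /\ is_safety_problem Pi /\
    provable_FI_n P n Pi /\ ~ provable_FI_n P n.-1 Pi.
Proof.
case: n => [//|m] _.
have CP := closed_class_atoms_below m.+1.
have /Forall_cons_iff [Pm Pl] : Forall (atoms_below m.+1) (atom m :: atoms m).
  by apply/(Forall_atoms _ m.+1) => i lt_im; exists i.
exists nullary_vocab, (atoms_below m.+1),
  (Problem FFalse FFalse (FNot (conj_atoms m))).
split=> //; split.
  split; [by move=> x | split; first by move=> x].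
  exact: closed_big_and (CP _ Pm) (Forall_impl _ CP Pl).
split.
  exists m.+1; split=> //; rewrite -[in X in derives _ _ _ X](size_atoms m).
  by apply: (@derives_unsat_Inc _ _ _ _ _ (atom m)) => // M rho;
    [case | case | move=> conj; apply].
move=> [k [k_le_m D]]; have [L [size_L PL invL]] := derives_invariant D.
by have := atoms_invariant_size PL invL; rewrite size_L ltnNge k_le_m.
Qed.

Theorem theorem4p7 :
  (forall (S : vocab) (P : form S -> Prop) (n : nat) (Pi : problem S),
      closed_class P -> is_safety_problem Pi ->
      provable_FI_n P n Pi -> provable_F (wedge_n n P) Pi)
  /\
  (forall n : nat, 0 < n ->
      exists (S : vocab) (P : form S -> Prop) (Pi : problem S),
        closed_class P /\ is_safety_problem Pi /\
        provable_FI_n P n Pi /\ ~ provable_FI_n P n.-1 Pi).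
Proof.
split; first by move=> S P n Pi CP _; apply: FI_n_provable_F_wedge.
exact: FI_n_strict.
Qed.
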